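(* Let $r\in\mathbb Z_n$, $\mathsf V=\mathsf V(2,r)$, $k\ge2$, and $\lambda_r=q^{-r(r+1)}$. There is an algebra homomorphism $\mathsf H_k(q)\to\mathrm{End}_{\mathsf D_n}(\mathsf V^{\otimes k})$ sending $\mathsf s_i\mapsto\lambda_r^{-1}\check{\mathsf R}_i$ for $1\le i\le k-1$.
   Context: $\mathbb k$ algebraically closed of characteristic zero, $n\ge2$, $q\in\mathbb k$ a primitive $n$th root of unity. $\mathsf D_n$ is the Hopf algebra generated by $a,b,c,d$ with relations $ba=qab$, $db=qbd$, $bc=cb$, $ca=qac$, $dc=qcd$, $da-qad=1-bc$, $a^n=d^n=0$, $b^n=c^n=1$ and $\Delta(a)=a\otimes b+1\otimes a$, $\Delta(d)=d\otimes c+1\otimes d$, $\Delta(b)=b\otimes b$, $\Delta(c)=c\otimes c$. For $1\le\ell\le n$, $s\in\mathbb Z_n$, $\mathsf V(\ell,s)$ is the module with basis $v_1,\dots,v_\ell$ and action $a.v_j=v_{j+1}$ ($j<\ell$), $a.v_\ell=0$, $b.v_j=q^{s+j-1}v_j$, $c.v_j=q^{j-(s+\ell)}v_j$, $d.v_1=0$, $d.v_j=\alpha_{j-1}(\ell)v_{j-1}$ ($j>1$), $\alpha_i(\ell)=\frac{(q^i-1)(1-q^{i-\ell})}{q-1}$. With $[m]=1+q+\dots+q^{m-1}$, $[m]!=[m]\cdots[1]$, $[0]!=1$, the R-matrix is $\mathcal R=\frac1n\sum_{m,s,t=0}^{n-1}\frac{q^{-tm}}{[s]!}a^sb^t\otimes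 c^md^s$. $\mathsf R$ is the action of $\mathcal R$ on $\mathsf V\otimes\mathsf V$ ($a^sb^t$ on the first factor), $\sigma$ the flip, $\check{\mathsf R}=\sigma\mathsf R$, and $\check{\mathsf R}_i=\mathrm{id}^{\otimes(i-1)}\otimes\check{\mathsf R}\otimes\mathrm{id}^{\otimes(k-i-1)}$ acting on tensor slots $i,i+1$ of $\mathsf V^{\otimes k}$. The Iwahori–Hecke algebra $\mathsf H_k(q)$ is the $\mathbb k$-algebra with generators $\mathsf s_1,\dots,\mathsf s_{k-1}$ and relations $\mathsf s_i\mathsf s_j=\mathsf s_j\mathsf s_i$ ($|i-j|>1$), $\mathsf s_i\mathsf s_{i+1}\mathsf s_i=\mathsf s_{i+1}\mathsf s_i\mathsf s_{i+1}$ ($1\le i\le k-2$), $(\mathsf s_i-1)(\mathsf s_i+q^{-1})=0$ ($1\le i\le k-1$). *)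

From HB Require Import structures.
From mathcomp Require Import all_boot all_order all_algebra.

Import Order.TTheory GRing.Theory Num.Theory.
Local Open Scope ring_scope.

(* The module V(l,s) of D_n.  Basis v_1..v_l is indexed by 'I_l, index j
   standing for v_(j+1).  Convention: M i j = coefficient of v_(i+1) in
   x . v_(j+1) (column j = image of the j-th basis vector).                 *)

Definition alpha (K : fieldType) (q : K) (l : nat) (i : int) : K :=
  (q ^ i - 1) * (1 - q ^ (i - (l%:Z))) / (q - 1).

(* a.v_j = v_(j+1), a.v_l = 0 *)
Definition Vmx_a (K : fieldType) (l : nat) : 'M[K]_l :=
  \matrix_(i, j) ((i : nat) == j.+1)%:R.
(* b.v_j = q^(s+j-1) v_j  (1-based j) *)
Definition Vmx_b (K : fieldType) (q : K) (l : nat) (s : int) : 'M[K]_l :=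
  \matrix_(i, j) (((i : nat) == j)%:R * q ^ (s + (j : nat)%:Z)).
(* c.v_j = q^(j-(s+l)) v_j  (1-based j) *)
Definition Vmx_c (K : fieldType) (q : K) (l : nat) (s : int) : 'M[K]_l :=
  \matrix_(i, j) (((i : nat) == j)%:R * q ^ (((j : nat).+1)%:Z - (s + l%:Z))).
(* d.v_1 = 0, d.v_j = alpha_(j-1)(l) v_(j-1)  (1-based j) *)
Definition Vmx_d (K : fieldType) (q : K) (l : nat) : 'M[K]_l :=
  \matrix_(i, j) (((j : nat) == (i : nat).+1)%:R * alpha K q l ((i : nat).+1)%:Z).

(* Linear endomorphisms of V^{(x)k}: basis indexed by {ffun 'I_k -> 'I_l}
   (pure tensors v_(x 0) (x) ... (x) v_(x (k-1))); an operator is given by its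
   matrix coefficients  A x y = coefficient of basis vector x in A(basis y). *)

Definition op (K : Type) (k l : nat) :=
  {ffun 'I_k -> 'I_l} -> {ffun 'I_k -> 'I_l} -> K.

Definition opmul (K : fieldType) (k l : nat) (A B : op K k l) : op K k l :=
  fun x z => \sum_(y : {ffun 'I_k -> 'I_l}) A x y * B y z.
Definition op1 (K : fieldType) (k l : nat) : op K k l := fun x y => (x == y)%:R.
Definition op0 (K : fieldType) (k l : nat) : op K k l := fun _ _ => 0.
Definition opadd (K : fieldType) (k l : nat) (A B : op K k l) : op K k l :=
  fun x y => A x y + B x y.
Definition opscale (K : fieldType) (k l : nat) (c : K) (A : op K k l) : op K k l :=
  fun x y => c * A x y.

Definition tens_op (K : fieldType) (k l : nat) (X : 'I_k -> 'M[K]_l) : op K k l :=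
  fun x y => \prod_(p : 'I_k) X p (x p) (y p).

(* Action of D_n on V^{(x)k} via the iterated coproduct:
   Delta^(k)(a) = sum_p 1^{(x)p} (x) a (x) b^{(x)(k-1-p)},  Delta^(k)(b) = b^{(x)k},
   Delta^(k)(d) = sum_p 1^{(x)p} (x) d (x) c^{(x)(k-1-p)},  Delta^(k)(c) = c^{(x)k}
   (from Delta(a) = a(x)b + 1(x)a, Delta(d) = d(x)c + 1(x)d, b,c grouplike). *)
Definition skew_prim_op (K : fieldType) (k l : nat) (X G : 'M[K]_l) : op K k l :=
  fun x y => \sum_(p : 'I_k)
    tens_op K k l (fun p' : 'I_k => if (p' < p)%N then 1%:M else if p' == p then X else G) x y.

Definition act_a (K : fieldType) (q : K) (k l : nat) (s : int) : op K k l :=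
  skew_prim_op K k l (Vmx_a K l) (Vmx_b K q l s).
Definition act_b (K : fieldType) (q : K) (k l : nat) (s : int) : op K k l :=
  tens_op K k l (fun _ => Vmx_b K q l s).
Definition act_c (K : fieldType) (q : K) (k l : nat) (s : int) : op K k l :=
  tens_op K k l (fun _ => Vmx_c K q l s).
Definition act_d (K : fieldType) (q : K) (k l : nat) (s : int) : op K k l :=
  skew_prim_op K k l (Vmx_d K q l) (Vmx_c K q l s).

(* f lies in End_{D_n}(V^{(x)k}): it commutes with the action of the algebra
   generators a, b, c, d of D_n (hence with the action of all of D_n). *)
Definition is_Dn_endo (K : fieldType) (q : K) (k l : nat) (s : int) (f : op K k l) : Prop :=
  [/\ opmul K k l f (act_a K q k l s) = opmul K k l (act_a K q k l s) f,
      opmul K k l f (act_b K q k l s) = opmul K k l (act_b K q k l s) f,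
      opmul K k l f (act_c K q k l s) = opmul K k l (act_c K q k l s) f &
      opmul K k l f (act_d K q k l s) = opmul K k l (act_d K q k l s) f].

(* The R-matrix  R = 1/n sum_{m,s,t<n} q^{-tm}/[s]! a^s b^t (x) c^m d^s.     *)

Definition qint (K : fieldType) (q : K) (m : nat) : K := \sum_(i < m) q ^+ i.
Definition qfact (K : fieldType) (q : K) (m : nat) : K :=
  \prod_(1 <= j < m.+1) qint K q j.

(* coefficient of v_x1 (x) v_x2 in R(v_y1 (x) v_y2) on V(l,s) (x) V(l,s) *)
Definition Rmat (K : fieldType) (n : nat) (q : K) (l : nat) (s0 : int)
  (x1 x2 y1 y2 : 'I_l) : K :=
  (n%:R)^-1 * \sum_(m < n) \sum_(s < n) \sum_(t < n)
     (q ^- (t * m) / qfact K q s) *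
     ((Vmx_a K l ^+ s *m Vmx_b K q l s0 ^+ t) x1 y1 *
      (Vmx_c K q l s0 ^+ m *m Vmx_d K q l ^+ s) x2 y2).

(* Rcheck = sigma o R *)
Definition Rcheck (K : fieldType) (n : nat) (q : K) (l : nat) (s0 : int)
  (z1 z2 y1 y2 : 'I_l) : K := Rmat K n q l s0 z2 z1 y1 y2.

(* Rcheck_i = id^{(x)(i-1)} (x) Rcheck (x) id^{(x)(k-i-1)}, acting on tensor
   slots i, i+1 (1-based), i.e. 0-based positions i-1 and i; 1 <= i <= k-1. *)
Definition Rcheck_i (K : fieldType) (n : nat) (q : K) (k l : nat) (s0 : int)
  (i : nat) : op K k l :=
  fun x y =>
    match (insub i.-1 : option 'I_k), (insub i : option 'I_k) with
    | Some p1, Some p2 =>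
        (\prod_(p : 'I_k | (p != p1) && (p != p2)) (x p == y p)%:R) *
        Rcheck K n q l s0 (x p1) (x p2) (y p1) (y p2)
    | _, _ => 0
    end.

(* The Iwahori-Hecke algebra H_k(q) is presented by generators s_1..s_(k-1)
   and relations; an algebra homomorphism H_k(q) -> End(W) with s_i |-> S i
   exists iff the S i satisfy the defining relations.  We state the claim
   "there is an algebra homomorphism H_k(q) -> End_{D_n}(W), s_i |-> S i" as:
   the S i (1 <= i <= k-1) lie in End_{D_n}(W) and satisfy the relations.   *)
Definition hecke_hom_into_EndDn (K : fieldType) (q : K) (k l : nat) (s0 : int)
  (S : nat -> op K k l) : Prop :=
  [/\ (forall i, (1 <= i <= k.-1)%N -> is_Dn_endo K q k l s0 (S i)),
      (forall i j, (1 <= i <= k.-1)%N -> (1 <= j <= k.-1)%N ->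
         (i.+1 < j)%N \/ (j.+1 < i)%N ->
         opmul K k l (S i) (S j) = opmul K k l (S j) (S i)),
      (forall i, (1 <= i)%N -> (i <= k - 2)%N ->
         opmul K k l (S i) (opmul K k l (S i.+1) (S i)) = opmul K k l (S i.+1) (opmul K k l (S i) (S i.+1))) &
      (forall i, (1 <= i <= k.-1)%N ->
         opmul K k l (opadd K k l (S i) (opscale K k l (-1) (op1 K k l)))
               (opadd K k l (S i) (opscale K k l (q^-1) (op1 K k l))) = op0 K k l)].

(* On V(2,r) the nilpotency a^2 = 0 leaves only the terms s = 0, 1 of the universal
   R-matrix, and the double sums over m and t are discrete Fourier sums over the n-th roots
   of unity which select m = r + y1 mod n.  Hence λ_r^-1 Ř is an explicit 4x4 matrix with
   entries in q and u = q^r; a finite computation shows that it satisfies the Hecke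
   relation, the braid relation on V^(x)3, and commutes with Δ(a), Δ(b), Δ(c), Δ(d).
   These local identities lift to V^(x)k because an operator on the slots i, i+1 commutes
   with operators on disjoint slots and sees the iterated coproducts of a, b, c, d only
   through Δ on those two slots. *)

From HB Require Import structures.
From mathcomp Require Import all_boot all_order all_algebra.
From mathcomp Require Import ring zify.
From Stdlib Require Import FunctionalExtensionality.
Import GRing.Theory.
Local Open Scope ring_scope.

Lemma sum_expr_unity (K : fieldType) (n : nat) (z : K) : z ^+ n = 1 ->
  \sum_(t < n) z ^+ t = if z == 1 then n%:R else 0.
Proof.
move=> zn; have [-> | z1] := eqVneq z 1.
  by rewrite (eq_bigr (fun _ => 1)) ?sumr_const ?card_ord // => t _; rewrite expr1n.
have := subrX1 z n; rewrite zn subrr => /esym/eqP.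
by rewrite mulf_eq0 subr_eq0 (negbTE z1) => /eqP.
Qed.

Section PrimitiveRoot.
Context {K : fieldType} {n : nat} {q : K}.
Hypotheses (hn : (1 < n)%N) (hq : n.-primitive_root q).

Lemma prim_root_neq0 : q != 0.
Proof.
apply/eqP => q0; move: (prim_expr_order hq).
by rewrite q0 expr0n gtn_eqF ?(ltnW hn) // => /eqP; rewrite eq_sym oner_eq0.
Qed.

Lemma prim_root_neq1 : q != 1.
Proof. by rewrite -[q]expr1 -(prim_order_dvd hq) dvdn1 gtn_eqF. Qed.

Lemma prim_root_char_sum (m e : nat) : (m < n)%N ->
  \sum_(t < n) q ^- (t * m) * (q ^+ e) ^+ t = (m == (e %% n)%N)%:R * n%:R.
Proof.
move=> mn; have q0 := prim_root_neq0.
under eq_bigr => t _ do rewrite mulnC exprM -exprVn -exprMn mulrC.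
rewrite sum_expr_unity; last first.
  rewrite exprMn exprVn -!exprM [(e * n)%N]mulnC [(m * n)%N]mulnC !exprM.
  by rewrite (prim_expr_order hq) !expr1n invr1 mulr1.
rewrite -(inj_eq (mulIf (expf_neq0 m q0))) mul1r divfK ?expf_neq0 //.
by rewrite (eq_prim_root_expr hq) (modn_small mn) eq_sym; case: eqP; rewrite ?mul1r ?mul0r.
Qed.

Lemma prim_root_sum_select (e : nat) (g : K) :
  \sum_(m < n) \sum_(t < n) q ^- (t * m) * (q ^+ e) ^+ t * g ^+ m = n%:R * g ^+ (e %% n)%N.
Proof.
under eq_bigr => m _ do rewrite -mulr_suml prim_root_char_sum //.
rewrite (bigD1 (Ordinal (ltn_pmod e (ltnW hn)))) //= eqxx mul1r big1 ?addr0 // => m.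
by rewrite -val_eqE /= => /negbTE ->; rewrite mul0r mul0r.
Qed.

End PrimitiveRoot.

Lemma sum_delta {K : pzSemiRingType} {I : finType} (G : I -> K) c :
  \sum_a (a == c)%:R * G a = G c.
Proof.
rewrite (bigD1 c) //= eqxx mul1r big1 ?addr0 // => a /negbTE ->.
by rewrite mul0r.
Qed.

Section TwoSite.
Context {K : fieldType} {l : nat}.

(* Operators on two tensor factors, in the index convention of [op]:
   [T x1 x2 y1 y2] is the coefficient of v_x1 (x) v_x2 in T (v_y1 (x) v_y2). *)
Definition op2 := 'I_l -> 'I_l -> 'I_l -> 'I_l -> K.
Definition mul2 (T T' : op2) : op2 :=
  fun x1 x2 z1 z2 => \sum_a \sum_b T x1 x2 a b * T' a b z1 z2.
Definition id2 : op2 := fun x1 x2 y1 y2 => (x1 == y1)%:R * (x2 == y2)%:R.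
Definition kron (M1 M2 : 'M[K]_l) : op2 := fun x1 x2 y1 y2 => M1 x1 y1 * M2 x2 y2.
Definition commute2 (T M : op2) : Prop :=
  forall x1 x2 y1 y2, mul2 T M x1 x2 y1 y2 = mul2 M T x1 x2 y1 y2.

Definition skew_coprod (X G : 'M[K]_l) : op2 :=
  fun x1 x2 y1 y2 => kron X G x1 x2 y1 y2 + kron 1%:M X x1 x2 y1 y2.

Lemma mul2_id2r T x1 x2 y1 y2 : mul2 T id2 x1 x2 y1 y2 = T x1 x2 y1 y2.
Proof.
rewrite /mul2 (eq_bigr (fun a => (a == y1)%:R * \sum_b (b == y2)%:R * T x1 x2 a b)).
  by rewrite sum_delta sum_delta.
by move=> a _; rewrite mulr_sumr; apply: eq_bigr => b _; rewrite /id2; ring.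
Qed.

Lemma mul2_id2l T x1 x2 y1 y2 : mul2 id2 T x1 x2 y1 y2 = T x1 x2 y1 y2.
Proof.
rewrite /mul2 (eq_bigr (fun a => (a == x1)%:R * \sum_b (b == x2)%:R * T a b y1 y2)).
  by rewrite sum_delta sum_delta.
move=> a _; rewrite mulr_sumr; apply: eq_bigr => b _.
by rewrite /id2 [x1 == a]eq_sym [x2 == b]eq_sym; ring.
Qed.

Lemma commute2_id2 T : commute2 T id2.
Proof. by move=> x1 x2 y1 y2; rewrite mul2_id2r mul2_id2l. Qed.

Lemma kron11 : kron 1%:M 1%:M = id2.
Proof.
do 4 apply: functional_extensionality => ?.
by rewrite /kron /id2 !mxE.
Qed.

Lemma mul2_skew_coprodr T X G x1 x2 y1 y2 :
  mul2 T (skew_coprod X G) x1 x2 y1 y2 =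
  mul2 T (kron X G) x1 x2 y1 y2 + mul2 T (kron 1%:M X) x1 x2 y1 y2.
Proof.
rewrite /mul2 -big_split; apply: eq_bigr => a _; rewrite -big_split.
by apply: eq_bigr => b _; rewrite mulrDr.
Qed.

Lemma mul2_skew_coprodl T X G x1 x2 y1 y2 :
  mul2 (skew_coprod X G) T x1 x2 y1 y2 =
  mul2 (kron X G) T x1 x2 y1 y2 + mul2 (kron 1%:M X) T x1 x2 y1 y2.
Proof.
rewrite /mul2 -big_split; apply: eq_bigr => a _; rewrite -big_split.
by apply: eq_bigr => b _; rewrite mulrDl.
Qed.

Definition op3 := 'I_l -> 'I_l -> 'I_l -> 'I_l -> 'I_l -> 'I_l -> K.
Definition mul3 (U U' : op3) : op3 := fun x1 x2 x3 z1 z2 z3 =>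
  \sum_a \sum_b \sum_c U x1 x2 x3 a b c * U' a b c z1 z2 z3.
Definition tens_id (T : op2) : op3 :=
  fun x1 x2 x3 y1 y2 y3 => T x1 x2 y1 y2 * (x3 == y3)%:R.
Definition id_tens (T : op2) : op3 :=
  fun x1 x2 x3 y1 y2 y3 => (x1 == y1)%:R * T x2 x3 y2 y3.

Implicit Types (T : op2) (U : op3).

Definition braid2 (T : op2) : Prop := forall x1 x2 x3 z1 z2 z3,
  mul3 (tens_id T) (mul3 (id_tens T) (tens_id T)) x1 x2 x3 z1 z2 z3 =
  mul3 (id_tens T) (mul3 (tens_id T) (id_tens T)) x1 x2 x3 z1 z2 z3.

Lemma mul3_tens_id T U x1 x2 x3 z1 z2 z3 :
  mul3 (tens_id T) U x1 x2 x3 z1 z2 z3 = \sum_a \sum_b T x1 x2 a b * U a b x3 z1 z2 z3.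
Proof.
apply: eq_bigr => a _; apply: eq_bigr => b _.
under eq_bigr => c _ do rewrite /tens_id -mulrA eq_sym.
by rewrite -mulr_sumr sum_delta.
Qed.

Lemma mul3_id_tens T U x1 x2 x3 z1 z2 z3 :
  mul3 (id_tens T) U x1 x2 x3 z1 z2 z3 = \sum_b \sum_c T x2 x3 b c * U x1 b c z1 z2 z3.
Proof.
rewrite /mul3 (eq_bigr (fun a => (a == x1)%:R *
  \sum_b \sum_c T x2 x3 b c * U a b c z1 z2 z3)); first by rewrite sum_delta.
move=> a _; rewrite mulr_sumr; apply: eq_bigr => b _; rewrite mulr_sumr.
by apply: eq_bigr => c _; rewrite /id_tens eq_sym; ring.
Qed.

Lemma braid2_of_sums T :
  (forall x1 x2 x3 z1 z2 z3,
    \sum_a \sum_b T x1 x2 a b * \sum_d T b x3 d z3 * T a d z1 z2 =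
    \sum_b \sum_c T x2 x3 b c * \sum_d T x1 b z1 d * T d c z2 z3) ->
  braid2 T.
Proof.
move=> hT x1 x2 x3 z1 z2 z3.
have -> : mul3 (tens_id T) (mul3 (id_tens T) (tens_id T)) x1 x2 x3 z1 z2 z3 =
          \sum_a \sum_b T x1 x2 a b * \sum_d T b x3 d z3 * T a d z1 z2.
  rewrite mul3_tens_id; apply: eq_bigr => a _; apply: eq_bigr => b _; congr (_ * _).
  rewrite mul3_id_tens; apply: eq_bigr => d _.
  rewrite (eq_bigr (fun c => (c == z3)%:R * (T b x3 d c * T a d z1 z2))) ?sum_delta //.
  by move=> c _; rewrite /tens_id; ring.
rewrite hT mul3_id_tens; apply: eq_bigr => b _; apply: eq_bigr => c _; congr (_ * _).
rewrite mul3_tens_id exchange_big; apply: eq_bigr => d _.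
rewrite (eq_bigr (fun a => (a == z1)%:R * (T x1 b a d * T d c z2 z3))) ?sum_delta //.
by move=> a _; rewrite /id_tens; ring.
Qed.

End TwoSite.
Arguments op2 : clear implicits.
Arguments op3 : clear implicits.

Section Slots.
Context {K : fieldType} {k l : nat}.
Local Notation F := {ffun 'I_k -> 'I_l}.
Local Notation op := (op K k l).
Local Notation opmul := (opmul K k l).

Definition agree_off (ps : seq 'I_k) (x y : F) : bool :=
  [forall p, (p \notin ps) ==> (x p == y p)].

Definition upd (x : F) (p : 'I_k) (a : 'I_l) : F :=
  [ffun j => if j == p then a else x j].

Definition upd2 (x : F) p1 p2 a b := upd (upd x p1 a) p2 b.

Lemma agree_offC ps x y : agree_off ps x y = agree_off ps y x.
Proof. by apply/forallP/forallP => h p; rewrite eq_sym; apply: h. Qed.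

Lemma eq_agree_off ps ps' x y : ps =i ps' -> agree_off ps x y = agree_off ps' x y.
Proof. by move=> e; apply/forallP/forallP => h p; have := h p; rewrite e. Qed.

Lemma agree_off_nil x y : agree_off [::] x y = (x == y).
Proof.
apply/forallP/eqP => [h | -> p]; last by rewrite eqxx implybT.
by apply/ffunP => p; apply/eqP/(implyP (h p)).
Qed.

Lemma agree_off_cons ps p x y : p \notin ps ->
  agree_off ps x y = agree_off (p :: ps) x y && (x p == y p).
Proof.
move=> hp; apply/forallP/andP => [h | [/forallP h xyp] j].
  split; last exact: implyP (h p) hp.
  by apply/forallP => j; rewrite in_cons negb_or; apply/implyP => /andP [_ /(implyP (h j))].
apply/implyP => hj; have [-> // | ne] := eqVneq j p.
by apply: (implyP (h j)); rewrite in_cons negb_or ne.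
Qed.

Lemma agree_off_upd ps p a x y : p \in ps ->
  agree_off ps (upd x p a) y = agree_off ps x y.
Proof.
move=> hp; apply: eq_forallb => j; rewrite ffunE.
by case: (eqVneq j p) => [-> | //]; rewrite hp.
Qed.

Lemma agree_off_cons_sum ps p x y : p \notin ps ->
  (agree_off (p :: ps) x y)%:R = \sum_a (agree_off ps (upd x p a) y)%:R :> K.
Proof.
move=> hp; rewrite -[LHS](sum_delta (fun=> _) (y p)).
apply: eq_bigr => a _; rewrite (agree_off_cons _ _ _ _ hp) agree_off_upd ?mem_head //.
by rewrite ffunE eqxx -mulnb natrM mulrC.
Qed.

Lemma upd2_1 x p1 p2 a b : p1 != p2 -> upd2 x p1 p2 a b p1 = a.
Proof. by move=> h; rewrite !ffunE (negbTE h) eqxx. Qed.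

Lemma upd2_2 x p1 p2 a b : upd2 x p1 p2 a b p2 = b.
Proof. by rewrite !ffunE eqxx. Qed.

Lemma upd2_out x p1 p2 a b j : j != p1 -> j != p2 -> upd2 x p1 p2 a b j = x j.
Proof. by move=> h1 h2; rewrite !ffunE (negbTE h1) (negbTE h2). Qed.

Lemma sum_agree_off2 p1 p2 x (G : F -> K) : p1 != p2 ->
  \sum_y (agree_off [:: p1; p2] x y)%:R * G y = \sum_a \sum_b G (upd2 x p1 p2 a b).
Proof.
move=> h12.
under eq_bigr => y _ do rewrite agree_off_cons_sum ?inE // mulr_suml; rewrite exchange_big.
apply: eq_bigr => a _; under eq_bigr => y _ do
  rewrite agree_off_cons_sum // mulr_suml; rewrite exchange_big.
apply: eq_bigr => b _; under eq_bigr => y _ do rewrite agree_off_nil eq_sym.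
exact: sum_delta.
Qed.

Lemma sum_agree_off3 p1 p2 p3 x (G : F -> K) : p1 != p2 -> p1 != p3 -> p2 != p3 ->
  \sum_y (agree_off [:: p1; p2; p3] x y)%:R * G y =
  \sum_a \sum_b \sum_c G (upd (upd2 x p1 p2 a b) p3 c).
Proof.
move=> h12 h13 h23.
under eq_bigr => y _ do rewrite agree_off_cons_sum ?inE ?negb_or ?h12 // mulr_suml.
rewrite exchange_big; apply: eq_bigr => a _.
under eq_bigr => y _ do rewrite agree_off_cons_sum ?inE // mulr_suml.
rewrite exchange_big; apply: eq_bigr => b _.
under eq_bigr => y _ do rewrite agree_off_cons_sum // mulr_suml.
rewrite exchange_big; apply: eq_bigr => c _.
under eq_bigr => y _ do rewrite agree_off_nil eq_sym.
exact: sum_delta.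
Qed.

Lemma prod_delta_agree_off (p1 p2 : 'I_k) (x y : F) :
  \prod_(p | (p != p1) && (p != p2)) ((x p == y p)%:R : K) = (agree_off [:: p1; p2] x y)%:R.
Proof.
case: (boolP (agree_off _ x y)) => [/forallP h | /forallPn [p]].
  apply: big1 => p /andP [h1 h2]; move: (h p); rewrite !inE negb_or h1 h2 /=.
  by move=> /eqP ->; rewrite eqxx.
rewrite negb_imply !inE negb_or => /andP [/andP [h1 h2] /negbTE hp].
by rewrite (bigD1 p) ?h1 ?h2 //= hp mul0r.
Qed.

Definition split2 p1 p2 (R : op) (M : op2 K l) : op :=
  fun x y => R x y * M (x p1) (x p2) (y p1) (y p2).

Definition on2 p1 p2 (T : op2 K l) : op :=
  split2 p1 p2 (fun x y => (agree_off [:: p1; p2] x y)%:R) T.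

Definition free2 p1 p2 (R : op) : Prop :=
  forall x y a b, R (upd2 x p1 p2 a b) y = R x y /\ R x (upd2 y p1 p2 a b) = R x y.

Section TwoSlots.
Variables (p1 p2 : 'I_k).
Hypothesis p12 : p1 != p2.

Lemma mul_on2_split2 T R M : free2 p1 p2 R ->
  opmul (on2 p1 p2 T) (split2 p1 p2 R M) = split2 p1 p2 R (mul2 T M).
Proof.
move=> hR; apply: functional_extensionality => x; apply: functional_extensionality => z.
rewrite /opmul /on2 /split2; under eq_bigr => y _ do rewrite -mulrA.
rewrite sum_agree_off2 // /mul2 mulr_sumr; apply: eq_bigr => a _.
rewrite mulr_sumr; apply: eq_bigr => b _.
by rewrite upd2_1 // upd2_2 (hR x z a b).1 mulrCA.
Qed.

Lemma mul_split2_on2 T R M : free2 p1 p2 R ->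
  opmul (split2 p1 p2 R M) (on2 p1 p2 T) = split2 p1 p2 R (mul2 M T).
Proof.
move=> hR; apply: functional_extensionality => x; apply: functional_extensionality => z.
rewrite /opmul /on2 /split2; under eq_bigr => y _ do rewrite agree_offC mulrCA.
rewrite sum_agree_off2 // /mul2 mulr_sumr; apply: eq_bigr => a _.
rewrite mulr_sumr; apply: eq_bigr => b _.
by rewrite upd2_1 // upd2_2 (hR x z a b).2 -mulrA mulrCA.
Qed.

Lemma on2_split2_commute T R M : free2 p1 p2 R -> commute2 T M ->
  opmul (on2 p1 p2 T) (split2 p1 p2 R M) = opmul (split2 p1 p2 R M) (on2 p1 p2 T).
Proof.
move=> hR hTM; rewrite mul_on2_split2 // mul_split2_on2 //.
by apply: functional_extensionality => x; apply: functional_extensionality => z; rewrite /split2 hTM.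
Qed.

Lemma free2_agree_off : free2 p1 p2 (fun x y => (agree_off [:: p1; p2] x y)%:R).
Proof.
move=> x y a b; split; first by rewrite !agree_off_upd ?inE ?eqxx ?orbT.
by rewrite agree_offC !agree_off_upd ?inE ?eqxx ?orbT // agree_offC.
Qed.

Lemma on2_mul T T' : opmul (on2 p1 p2 T) (on2 p1 p2 T') = on2 p1 p2 (mul2 T T').
Proof. exact: mul_on2_split2 free2_agree_off. Qed.

Lemma agree_off_slots2 x y :
  agree_off [:: p1; p2] x y && (x p1 == y p1) && (x p2 == y p2) = (x == y).
Proof.
by rewrite -agree_off_nil (agree_off_cons [::] p2) // (agree_off_cons [:: p2] p1) ?inE.
Qed.

Lemma op1_on2 : op1 K k l = on2 p1 p2 id2.
Proof.
apply: functional_extensionality => x; apply: functional_extensionality => y.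
by rewrite /op1 /on2 /split2 /id2 -agree_off_slots2 -!mulnb !natrM mulrA.
Qed.

Lemma on2_quadratic (T : op2 K l) (c : K) :
  (forall x1 x2 y1 y2, mul2 (fun x1 x2 y1 y2 => T x1 x2 y1 y2 + (-1) * id2 x1 x2 y1 y2)
                            (fun x1 x2 y1 y2 => T x1 x2 y1 y2 + c * id2 x1 x2 y1 y2)
                            x1 x2 y1 y2 = 0) ->
  opmul (opadd K k l (on2 p1 p2 T) (opscale K k l (-1) (op1 K k l)))
              (opadd K k l (on2 p1 p2 T) (opscale K k l c (op1 K k l))) = op0 K k l.
Proof.
move=> hT; rewrite op1_on2.
have on2_lin d : opadd K k l (on2 p1 p2 T) (opscale K k l d (on2 p1 p2 id2)) =
    on2 p1 p2 (fun x1 x2 y1 y2 => T x1 x2 y1 y2 + d * id2 x1 x2 y1 y2).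
  apply: functional_extensionality => x; apply: functional_extensionality => y.
  by rewrite /opadd /opscale /on2 /split2; ring.
rewrite !on2_lin on2_mul //.
apply: functional_extensionality => x; apply: functional_extensionality => y.
by rewrite /on2 /split2 hT mulr0.
Qed.

End TwoSlots.
End Slots.

Section SlotCommutation.
Context {K : fieldType} {k l : nat}.
Local Notation op := (op K k l).
Local Notation opmul := (opmul K k l).

Lemma opmul_sumr (A : op) (B : 'I_k -> op) x z :
  opmul A (fun x y => \sum_p B p x y) x z = \sum_p opmul A (B p) x z.
Proof. by rewrite /opmul; under eq_bigr => y _ do rewrite mulr_sumr; rewrite exchange_big. Qed.

Lemma opmul_suml (A : op) (B : 'I_k -> op) x z :
  opmul (fun x y => \sum_p B p x y) A x z = \sum_p opmul (B p) A x z.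
Proof. by rewrite /opmul; under eq_bigr => y _ do rewrite mulr_suml; rewrite exchange_big. Qed.

Definition tens_off p1 p2 (X : 'I_k -> 'M[K]_l) : op :=
  fun x y => \prod_(p | (p != p1) && (p != p2)) X p (x p) (y p).

Lemma tens_split2 p1 p2 X : p1 != p2 ->
  tens_op K k l X = split2 p1 p2 (tens_off p1 p2 X) (kron (X p1) (X p2)).
Proof.
move=> p12; apply: functional_extensionality => x; apply: functional_extensionality => y.
rewrite /tens_op /split2 /tens_off /kron (bigD1 p1) //= (bigD1 p2) 1?eq_sym //=.
by rewrite mulrA mulrC; congr (_ * _); apply: eq_bigl => p; rewrite andbC.
Qed.

Lemma free2_tens_off p1 p2 X : free2 p1 p2 (tens_off p1 p2 X).
Proof. by move=> x y a b; split; apply: eq_bigr => p /andP [h1 h2]; rewrite upd2_out. Qed.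

Lemma on2_tens_commute p1 p2 T G : p1 != p2 -> commute2 T (kron G G) ->
  opmul (on2 p1 p2 T) (tens_op K k l (fun=> G)) = opmul (tens_op K k l (fun=> G)) (on2 p1 p2 T).
Proof.
move=> p12 hG; rewrite (tens_split2 _ _ _ p12).
by apply: on2_split2_commute => //; apply: free2_tens_off.
Qed.

Definition skew_factor (X G : 'M[K]_l) (p : 'I_k) : 'I_k -> 'M[K]_l :=
  fun p' => if (p' < p)%N then 1%:M else if p' == p then X else G.

Lemma on2_skew_commute (p1 p2 : 'I_k) (T : op2 K l) (X G : 'M[K]_l) :
  (p2 : nat) = p1.+1 ->
  commute2 T (kron G G) -> commute2 T (skew_coprod X G) ->
  opmul (on2 p1 p2 T) (skew_prim_op K k l X G) = opmul (skew_prim_op K k l X G) (on2 p1 p2 T).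
Proof.
move=> hp hGG hXG; have p12 : p1 != p2 by rewrite -val_eqE /= hp neq_ltn ltnSn.
set Y := skew_factor X G.
have Y_off p : p != p1 -> p != p2 -> commute2 T (kron (Y p p1) (Y p p2)).
  move=> hp1 hp2; rewrite /Y /skew_factor ![_ == p]eq_sym (negbTE hp1) (negbTE hp2) hp.
  have hp2' : (p : nat) != p1.+1 by rewrite -hp val_eqE.
  case: (ltnP p1 p) => [lt1 | le1]; last by rewrite ltnNge (leq_trans le1).
  by rewrite ltn_neqAle [p1.+1 == _]eq_sym hp2' lt1 kron11; apply: commute2_id2.
have Y_tens_off : tens_off p1 p2 (Y p1) = tens_off p1 p2 (Y p2).
  apply: functional_extensionality => x; apply: functional_extensionality => y.
  apply: eq_bigr => p /andP [hp1 hp2]; rewrite /Y /skew_factor (negbTE hp1) (negbTE hp2).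
  have hp1' : (p : nat) != p1 := hp1.
  by rewrite hp ltnS [(p <= p1)%N]leq_eqVlt (negbTE hp1').
apply: functional_extensionality => x; apply: functional_extensionality => z.
change (skew_prim_op K k l X G) with (fun x y => \sum_p tens_op K k l (Y p) x y).
rewrite opmul_sumr opmul_suml.
have free2Y p : free2 p1 p2 (tens_off p1 p2 (Y p)) := free2_tens_off _ _ _.
under eq_bigr => p _ do
  rewrite (tens_split2 _ _ _ p12) (mul_on2_split2 _ _ p12 _ _ _ (free2Y p)).
under [RHS]eq_bigr => p _ do
  rewrite (tens_split2 _ _ _ p12) (mul_split2_on2 _ _ p12 _ _ _ (free2Y p)).
(* The summands whose X-factor lies outside the slots p1, p2 commute with T one by one;
   the two with X in slot p1 or p2 share their off-slot part and add up to Δ(X). *)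
rewrite (bigD1 p1) // [RHS](bigD1 p1) // (bigD1 p2) 1?eq_sym // [in RHS](bigD1 p2) 1?eq_sym //=.
rewrite !addrA; congr (_ + _); last first.
  by apply: eq_bigr => p /andP [hp1 hp2]; rewrite /split2 Y_off.
have Y11 : Y p1 p1 = X by rewrite /Y /skew_factor ltnn eqxx.
have Y12 : Y p1 p2 = G by rewrite /Y /skew_factor hp ltnNge leqnSn eq_sym (negbTE p12).
have Y21 : Y p2 p1 = 1%:M by rewrite /Y /skew_factor hp ltnSn.
have Y22 : Y p2 p2 = X by rewrite /Y /skew_factor ltnn eqxx.
rewrite /split2 Y11 Y12 Y21 Y22 Y_tens_off -!mulrDr.
by rewrite -mul2_skew_coprodr hXG mul2_skew_coprodl.
Qed.

Lemma on2_commute_far (p1 p2 p3 p4 : 'I_k) (T T' : op2 K l) :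
  p1 != p2 -> p3 != p4 -> p3 != p1 -> p3 != p2 -> p4 != p1 -> p4 != p2 ->
  opmul (on2 p1 p2 T) (on2 p3 p4 T') = opmul (on2 p3 p4 T') (on2 p1 p2 T).
Proof.
move=> p12 p34 p31 p32 p41 p42.
(* On the slots p1, p2 the operator [on2 p3 p4 T'] acts as the identity. *)
pose R x y := (agree_off [:: p1; p2; p3; p4] x y)%:R * T' (x p3) (x p4) (y p3) (y p4).
have -> : on2 p3 p4 T' = split2 p1 p2 R id2.
  apply: functional_extensionality => x; apply: functional_extensionality => y.
  rewrite /on2 /split2 /R /id2 (agree_off_cons [:: p3; p4] p2); last first.
    by rewrite !inE ![p2 == _]eq_sym (negbTE p32) (negbTE p42).
  rewrite (agree_off_cons [:: p2; p3; p4] p1); last first.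
    by rewrite !inE [p1 == p3]eq_sym [p1 == p4]eq_sym (negbTE p12) (negbTE p31) (negbTE p41).
  by rewrite -!mulnb !natrM; ring.
rewrite on2_split2_commute //; last exact: commute2_id2.
move=> x y a b; rewrite /R !upd2_out //; split.
  by rewrite !agree_off_upd ?inE ?eqxx ?orbT.
by rewrite agree_offC !agree_off_upd ?inE ?eqxx ?orbT // agree_offC.
Qed.

End SlotCommutation.

Section ThreeSlots.
Context {K : fieldType} {k l : nat}.
Local Notation opmul := (opmul K k l).
Variables (p1 p2 p3 : 'I_k).
Hypotheses (p12 : p1 != p2) (p13 : p1 != p3) (p23 : p2 != p3).

Definition on3 (U : op3 K l) : op K k l := fun x y =>
  (agree_off [:: p1; p2; p3] x y)%:R * U (x p1) (x p2) (x p3) (y p1) (y p2) (y p3).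

Lemma on3_mul U U' : opmul (on3 U) (on3 U') = on3 (mul3 U U').
Proof.
apply: functional_extensionality => x; apply: functional_extensionality => z.
rewrite /opmul /on3; under eq_bigr => y _ do rewrite -mulrA.
rewrite sum_agree_off3 // /mul3 mulr_sumr; apply: eq_bigr => a _.
rewrite mulr_sumr; apply: eq_bigr => b _; rewrite mulr_sumr; apply: eq_bigr => c _.
rewrite !ffunE eqxx (negbTE p13) (negbTE p23) (negbTE p12) !eqxx.
by rewrite !agree_off_upd ?inE ?eqxx ?orbT // mulrCA.
Qed.

Lemma on2_on3l T : on2 p1 p2 T = on3 (tens_id T).
Proof.
apply: functional_extensionality => x; apply: functional_extensionality => y.
have n3 : p3 \notin [:: p1; p2] by rewrite !inE ![p3 == _]eq_sym (negbTE p13) (negbTE p23).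
have e : p3 :: [:: p1; p2] =i [:: p1; p2; p3].
  by move=> j; rewrite !inE; case: (j == p1); case: (j == p2); case: (j == p3).
rewrite /on2 /split2 /on3 /tens_id (agree_off_cons _ _ _ _ n3).
rewrite (eq_agree_off _ _ _ _ e).
by rewrite -mulnb natrM; ring.
Qed.

Lemma on2_on3r T : on2 p2 p3 T = on3 (id_tens T).
Proof.
apply: functional_extensionality => x; apply: functional_extensionality => y.
have n1 : p1 \notin [:: p2; p3] by rewrite !inE (negbTE p12) (negbTE p13).
rewrite /on2 /split2 /on3 /id_tens (agree_off_cons _ _ _ _ n1).
by rewrite -mulnb natrM; ring.
Qed.

Lemma on2_braid T : braid2 T ->
  opmul (on2 p1 p2 T) (opmul (on2 p2 p3 T) (on2 p1 p2 T)) =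
  opmul (on2 p2 p3 T) (opmul (on2 p1 p2 T) (on2 p2 p3 T)).
Proof.
move=> hT; rewrite on2_on3l on2_on3r !on3_mul.
apply: functional_extensionality => x; apply: functional_extensionality => y.
by rewrite /on3 hT.
Qed.

End ThreeSlots.

Lemma diag_mx_exp (K : comPzRingType) l (d : 'rV[K]_l) t :
  diag_mx d ^+ t = diag_mx (\row_j d 0 j ^+ t).
Proof.
elim: t => [|t IHt].
  by apply/matrixP => i j; rewrite !mxE expr0.
by rewrite exprS IHt -mulmxE mulmx_diag; congr diag_mx; apply/rowP => j; rewrite !mxE exprS.
Qed.

Lemma Vmx_b_diag (K : fieldType) q l s :
  Vmx_b K q l s = diag_mx (\row_j q ^ (s + (j : nat)%:Z)).
Proof. by apply/matrixP => i j; rewrite !mxE mulr_natl val_eqE; case: eqP => [->|]. Qed.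

Lemma Vmx_c_diag (K : fieldType) q l s :
  Vmx_c K q l s = diag_mx (\row_j q ^ ((j : nat).+1%:Z - (s + l%:Z))).
Proof. by apply/matrixP => i j; rewrite !mxE mulr_natl val_eqE; case: eqP => [->|]. Qed.

Lemma Vmx_bE (K : fieldType) q l (r : nat) i j :
  Vmx_b K q l r%:Z i j = ((i : nat) == j)%:R * (q ^+ r * q ^+ j).
Proof. by rewrite mxE -PoszD -exprnP exprD. Qed.

Section RMatrix.
Context {K : fieldType} {n : nat} {q : K}.
Hypotheses (hn : (1 < n)%N) (hq : n.-primitive_root q).

Lemma Rmat_expansion l (r : nat) x1 x2 y1 y2 :
  Rmat K n q l r%:Z x1 x2 y1 y2 =
  \sum_(s < n) (Vmx_a K l ^+ s) x1 y1 * (Vmx_d K q l ^+ s) x2 y2 / qfact K q s *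
     (q ^ ((x2 : nat).+1%:Z - (r%:Z + l%:Z))) ^+ ((r + y1) %% n)%N.
Proof.
rewrite /Rmat exchange_big mulr_sumr; apply: eq_bigr => s _ /=.
set g := q ^ _; set C := _ / _.
under eq_bigr => m _ do under eq_bigr => t _ do
  rewrite Vmx_b_diag Vmx_c_diag !diag_mx_exp mul_mx_diag mul_diag_mx !mxE -PoszD -exprnP.
rewrite (mulrC C) -[RHS](mulKf (prim_root_natf_neq0 hq)) [_%:R * _]mulrA.
rewrite -(prim_root_sum_select hn hq (r + y1) g) mulr_suml; congr (_ * _).
apply: eq_bigr => m _; rewrite mulr_suml; apply: eq_bigr => t _.
by rewrite /C; ring.
Qed.
End RMatrix.

Lemma I2_cases (x : 'I_2) : x = ord0 \/ x = ord_max.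
Proof. by case: x => [[|[|?]] ?]; [left | right | ]; rewrite //; apply: val_inj. Qed.

Lemma sum_I2 (K : nmodType) (F : 'I_2 -> K) : \sum_a F a = F ord0 + F ord_max.
Proof. by rewrite big_ord_recl big_ord1; congr (_ + F _); apply: val_inj. Qed.

Ltac case_I2 :=
  repeat match goal with x : 'I_2 |- _ => have [->|->] := I2_cases x; clear x end.

Lemma Vmx_a_V2_nilpotent (K : fieldType) s : (1 < s)%N -> Vmx_a K 2 ^+ s = 0.
Proof.
move=> /subnK <-; rewrite exprD.
suff -> : Vmx_a K 2 ^+ 2 = 0 by rewrite mulr0.
apply/matrixP => i j; rewrite expr2 -mulmxE !mxE sum_I2 !mxE.
by case_I2; rewrite /= ?mul0r ?mulr0 ?addr0.
Qed.

(* λ_r^-1 Ř on V(2,r) (x) V(2,r) in the convention of [op2], with u = q^r (see [Rcheck_V2]). *)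
Definition Rcheck2 {K : fieldType} (q u : K) (z1 z2 y1 y2 : 'I_2) : K :=
  match nat_of_ord z1, nat_of_ord z2, nat_of_ord y1, nat_of_ord y2 with
  | 0, 0, 0, 0 | 1, 1, 1, 1 => 1
  | 1, 0, 0, 1 => u
  | 0, 1, 0, 1 => 1 - q^-1
  | 0, 1, 1, 0 => (u * q)^-1
  | _, _, _, _ => 0
  end.

Lemma Vmx_c_V2_diag (K : fieldType) (q : K) (r : nat) (j : 'I_2) :
  q ^ ((j : nat).+1%:Z - (r%:Z + 2%:Z)) = (q ^+ r * q ^+ (1 - j))^-1.
Proof. by rewrite -exprD exprnN; congr (_ ^ _); case: j => [[|[|?]] ?] //=; lia. Qed.

Section V2.
Context {K : fieldType} {n : nat} {q : K}.
Hypotheses (hn : (1 < n)%N) (hq : n.-primitive_root q).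

Lemma Rmat_V2 (r : nat) x1 x2 y1 y2 :
  Rmat K n q 2 r%:Z x1 x2 y1 y2 =
  ((x1 == y1)%:R * (x2 == y2)%:R + Vmx_a K 2 x1 y1 * Vmx_d K q 2 x2 y2) *
  (q ^ ((x2 : nat).+1%:Z - (r%:Z + 2%:Z))) ^+ ((r + y1) %% n)%N.
Proof.
rewrite (Rmat_expansion hn hq); have -> : n = (n - 2).+2 by lia.
rewrite !big_ord_recl big1 => [|s _]; last first.
  by rewrite Vmx_a_V2_nilpotent // !mxE !mul0r.
have qfact0 : qfact K q 0 = 1 by rewrite /qfact big_geq.
have qfact1 : qfact K q 1 = 1 by rewrite /qfact big_nat1 /qint big_ord1 expr0.
by rewrite /= qfact0 qfact1 !expr0 !expr1 !mxE !divr1 addr0 mulrDl.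
Qed.

Lemma alpha_V2 : alpha K q 2 1%:Z = 1 - q^-1.
Proof.
have [q0 q1] := (prim_root_neq0 hn hq, prim_root_neq1 hn hq).
rewrite /alpha (_ : 1 - 2 = -1) // exprN1 expr1z.
by field; rewrite subr_eq0 q0 q1.
Qed.

Lemma Rcheck_V2 (r : nat) z1 z2 y1 y2 :
  q ^+ (r * r.+1) * Rcheck K n q 2 r%:Z z1 z2 y1 y2 = Rcheck2 q (q ^+ r) z1 z2 y1 y2.
Proof.
have q0 := prim_root_neq0 hn hq.
rewrite /Rcheck Rmat_V2 Vmx_c_V2_diag expr_mod; last first.
  by rewrite exprVn -exprD -exprM mulnC exprM (prim_expr_order hq) expr1n invr1.
rewrite exprD exprM exprSr; set u := q ^+ r; have u0 : u != 0 by apply: expf_neq0.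
case_I2; rewrite /Rcheck2 !mxE /= ?alpha_V2 ?expr0 ?expr1;
  rewrite ?(mul0r, mulr0, mul1r, mulr1, addr0, add0r) // exprVn ?exprMn -/u.
all: by field; rewrite ?u0 ?q0 ?expf_neq0.
Qed.
End V2.

Section Rcheck2Identities.
Context {K : fieldType} {q u : K}.
Hypotheses (q0 : q != 0) (u0 : u != 0).

Lemma Rcheck2_quadratic x1 x2 y1 y2 :
  mul2 (fun x1 x2 y1 y2 => Rcheck2 q u x1 x2 y1 y2 + (-1) * id2 x1 x2 y1 y2)
       (fun x1 x2 y1 y2 => Rcheck2 q u x1 x2 y1 y2 + q^-1 * id2 x1 x2 y1 y2)
       x1 x2 y1 y2 = 0.
Proof. by rewrite /mul2 !sum_I2; case_I2; rewrite /Rcheck2 /id2 /=; field; rewrite ?q0. Qed.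

Lemma Rcheck2_braid : braid2 (Rcheck2 q u).
Proof.
apply: braid2_of_sums => x1 x2 x3 z1 z2 z3; rewrite !sum_I2.
case_I2; rewrite /Rcheck2 /= ?(mul0r, mulr0, mul1r, mulr1, addr0, add0r) //.
all: by field; rewrite ?q0 ?u0.
Qed.

End Rcheck2Identities.

Section V2Commute.
Context {K : fieldType} {n : nat} {q : K}.
Hypotheses (hn : (1 < n)%N) (hq : n.-primitive_root q).
Variable r : nat.
Local Notation R2 := (Rcheck2 q (q ^+ r)).
Let q0 : q != 0 := prim_root_neq0 hn hq.
Let u0 : q ^+ r != 0 := expf_neq0 r q0.

Ltac V2_calc :=
  let x1 := fresh in let x2 := fresh in let y1 := fresh in let y2 := fresh in
  move=> x1 x2 y1 y2;
  rewrite /mul2 !sum_I2 /skew_coprod /kron ?Vmx_bE ?mxE ?Vmx_c_V2_diag;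
  case_I2; rewrite /Rcheck2 /= ?(alpha_V2 hn hq) ?expr0 ?expr1;
  rewrite ?(mul0r, mulr0, mul1r, mulr1, addr0, add0r) //;
  field; rewrite ?q0 ?u0 ?mulf_neq0.

Lemma Rcheck2_commute_b : commute2 R2 (kron (Vmx_b K q 2 r%:Z) (Vmx_b K q 2 r%:Z)).
Proof. by V2_calc. Qed.

Lemma Rcheck2_commute_c : commute2 R2 (kron (Vmx_c K q 2 r%:Z) (Vmx_c K q 2 r%:Z)).
Proof. by V2_calc. Qed.

Lemma Rcheck2_commute_a : commute2 R2 (skew_coprod (Vmx_a K 2) (Vmx_b K q 2 r%:Z)).
Proof. by V2_calc. Qed.

Lemma Rcheck2_commute_d : commute2 R2 (skew_coprod (Vmx_d K q 2) (Vmx_c K q 2 r%:Z)).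
Proof. by V2_calc. Qed.

End V2Commute.

Section LiftedRMatrix.
Context {K : fieldType} {n : nat} {q : K}.
Hypotheses (hn : (1 < n)%N) (hq : n.-primitive_root q).
Variables (r k : nat).
Local Notation R2 := (Rcheck2 q (q ^+ r)).

Lemma on2_Rcheck2_Dn_endo (p1 p2 : 'I_k) : (p2 : nat) = p1.+1 ->
  is_Dn_endo K q k 2 r%:Z (on2 p1 p2 R2).
Proof.
move=> hp; have p12 : p1 != p2 by rewrite -val_eqE /= hp neq_ltn ltnSn.
split.
- exact: on2_skew_commute hp (Rcheck2_commute_b hn hq r) (Rcheck2_commute_a hn hq r).
- exact: on2_tens_commute p12 (Rcheck2_commute_b hn hq r).
- exact: on2_tens_commute p12 (Rcheck2_commute_c hn hq r).
- exact: on2_skew_commute hp (Rcheck2_commute_c hn hq r) (Rcheck2_commute_d hn hq r).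
Qed.

Lemma Rcheck_i_on2 (p1 p2 : 'I_k) i : (p1 : nat) = i.-1 -> (p2 : nat) = i ->
  opscale K k 2 ((q ^- (r * r.+1))^-1) (Rcheck_i K n q k 2 r%:Z i) = on2 p1 p2 R2.
Proof.
move=> e1 e2; apply: functional_extensionality => x; apply: functional_extensionality => y.
have h1 : (i.-1 < k)%N by rewrite -e1.
have h2 : (i < k)%N by rewrite -e2.
rewrite /opscale /Rcheck_i (insubT (fun j => j < k)%N h1) (insubT (fun j => j < k)%N h2).
have -> : (Sub i.-1 h1 : 'I_k) = p1 by apply: val_inj; rewrite /= e1.
have -> : (Sub i h2 : 'I_k) = p2 by apply: val_inj; rewrite /= e2.
by rewrite prod_delta_agree_off invrK mulrCA (Rcheck_V2 hn hq).
Qed.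

End LiftedRMatrix.

Theorem mainTheorem4 (K : closedFieldType) (hchar : [pchar K] =i pred0)
  (n : nat) (hn : (2 <= n)%N) (q : K) (hq : n.-primitive_root q)
  (r : 'I_n) (k : nat) (hk : (2 <= k)%N) :
  hecke_hom_into_EndDn K q k 2 (r : nat)%:Z
    (fun i => opscale K k 2 ((q ^- ((r : nat) * (r : nat).+1))^-1)
                      (Rcheck_i K n q k 2 (r : nat)%:Z i)).
Proof.
have [q0 u0] := (prim_root_neq0 hn hq, expf_neq0 r (prim_root_neq0 hn hq)).
case: k hk => [//|k] hk; set S := fun i => opscale _ _ _ _ _.
have S_on2 i : (1 <= i <= k)%N -> S i = on2 (inord i.-1) (inord i) (Rcheck2 q (q ^+ r)).
  by case/andP => i1 ik; apply: (Rcheck_i_on2 hn hq); rewrite inordK //; lia.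
split.
- move=> i hi; rewrite S_on2 //; apply: (on2_Rcheck2_Dn_endo hn hq).
  by case/andP: hi => i1 ik; rewrite !inordK //; lia.
- move=> i j hi hj hij; rewrite !S_on2 //.
  by apply: on2_commute_far; rewrite -val_eqE /= !inordK; lia.
- move=> i i1 ik; have [hi hi1] : (1 <= i <= k)%N /\ (1 <= i.+1 <= k)%N by lia.
  rewrite !S_on2 //.
  by apply: on2_braid; [rewrite -val_eqE /= !inordK; lia.. | exact: Rcheck2_braid q0 u0].
- move=> i hi; rewrite S_on2 //; apply: on2_quadratic; last exact: Rcheck2_quadratic q0 u0.
  by rewrite -val_eqE /= !inordK; lia.
Qed.
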